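(* Transport $T$ via $\varepsilon$ to an antilinear map of $(H\otimes R)\oplus(H^*\otimes R^* )$. Then this map is a sum $A_1\otimes B_1+A_2\otimes B_2$ of two pure tensors of $\mathbb C$-antilinear maps, as follows. - If $T$ is mixing: $A_1\otimes B_1:H\otimes R\to H^*\otimes R^*$ with $A_1:H\to H^*$ and $B_1:R\to R^*$, and $A_2\otimes B_2:H^*\otimes R^*\to H\otimes R$ with $A_2:H^*\to H$ and $B_2:R^*\to R$. - If $T$ is nonmixing: $A_1\otimes B_1:H\otimes R\to H\otimes R$ with $A_1:H\to H$ and $B_1:R\to R$, and $A_2\otimes B_2:H^*\otimes R^*\to H^*\otimes R^*$ with $A_2:H^*\to H^*$ and $B_2:R^*\to R^*$.
   Context: Setting: - $G_0$ is a compact group, and $R$ is a finite-dimensional irreducible unitary $G_0$-representation with a $G_0$-invariant Hermitian inner product $\langle\,,\rangle_R$. - $V$ is a finite-dimensional unitary $G_0$-representation with inner product $\langle\,,\rangle_V$, all of whose irreducible subrepresentations are isomorphic to $R$. Duals carry the action $g(f)=f\circ g^{-1}$. - $W=V\oplus V^*$, with antilinear $C:W\to W$ given by $C(v)=\langle v,\cdot\rangle_V$ on $V$ and $C|_{V^*}=(C|_V)^{-1}$. The unitary structure on $V^*$ is transported by $C$. - $H=\mathrm{Hom}_{G_0}(R,V)$, $H^*=\mathrm{Hom}_{G_0}(R^*,V^* )$, and $\varepsilon:(H\otimes R)\oplus(H^*\otimes R^* )\to W$, $h\otimes r+f\otimes t\mapsto h(r)+f(t)$, which is a $G_0$-equivariant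 isomorphism. - The Hermitian form on $H$ is defined by $\langle h_1(r_1),h_2(r_2)\rangle_V=\langle h_1,h_2\rangle_H\langle r_1,r_2\rangle_R$, and similarly on $H^*$. - $T:W\to W$ is an antiunitary operator commuting with $C$, and there is an automorphism $a$ of $G_0$ such that $T\circ g=a(g)\circ T$ on $W$ for all $g\in G_0$. - $T$ is either mixing ($T(V)=V^*$, $T(V^* )=V$) or nonmixing ($T(V)=V$, $T(V^* )=V^*$). For antilinear maps $A,B$, the map $A\otimes B$ is defined by $(A\otimes B)(x\otimes y)=A(x)\otimes B(y)$. *)

From HB Require Import structures.
From mathcomp Require Import all_boot all_order all_algebra.
From mathcomp Require Import all_classical all_reals all_analysis.
From mathcomp Require Import complex.
From Stdlib Require Import ClassicalEpsilon.
Set Implicit Arguments. Unset Strict Implicit. Unset Printing Implicit Defensive.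
Import Order.TTheory GRing.Theory Num.Theory.
Import numFieldNormedType.Exports.
Local Open Scope ring_scope.

Section Defs.
Variable K : realType.
Local Notation C := (K[i]).

Definition antilinear_on (U W : lmodType C) (P : U -> Prop) (f : U -> W) :=
  forall (a : C) (x y : U), P x -> P y -> f (a *: x + y) = a^* *: f x + f y.
Definition antilinear (U W : lmodType C) (f : U -> W) :=
  antilinear_on (fun _ => True) f.
Definition antilinear_between (U W : lmodType C) (P : U -> Prop) (Q : W -> Prop)
    (f : U -> W) := antilinear_on P f /\ (forall x, P x -> Q (f x)).

(** Hermitian inner product, antilinear in the first, linear in the second slot *)
Definition is_inner_product (V : lmodType C) (ip : V -> V -> C) :=
  [/\ forall x (a : C) y z, ip x (a *: y + z) = a * ip x y + ip x z,
      forall x y, ip y x = (ip x y)^*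
    & forall x, x != 0 -> 0 < ip x x].

Definition compact_group (G : topologicalType) (mul : G -> G -> G) (inv : G -> G)
    (e : G) :=
  [/\ associative mul, left_id e mul & left_inverse e inv mul] /\
  [/\ continuous (fun p : G * G => mul p.1 p.2), continuous inv,
      compact [set: G] & hausdorff_space G].

Definition group_automorphism (G : Type) (mul : G -> G -> G) (a : G -> G) :=
  bijective a /\ forall g h, a (mul g h) = mul (a g) (a h).

Definition unitary_rep (G : topologicalType) (mul : G -> G -> G) (e : G)
    (V : vectType C) (ip : V -> V -> C) (rho : G -> 'End(V)) :=
  [/\ rho e = \1%VF,
      forall g h, rho (mul g h) = (rho g \o rho h)%VF,
      forall g v w, ip (rho g v) (rho g w) = ip v w
    & forall v w, continuous (fun g : G => (@complex.Re K (ip v (rho g w)) : K)) /\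
                  continuous (fun g : G => (@complex.Im K (ip v (rho g w)) : K))].

Definition invariant (G : Type) (V : vectType C) (rho : G -> 'End(V))
    (U : {vspace V}) := forall g, (rho g @: U <= U)%VS.

Definition irreducible_sub (G : Type) (V : vectType C) (rho : G -> 'End(V))
    (U : {vspace V}) :=
  [/\ U != 0%VS, invariant rho U &
      forall U' : {vspace V}, (U' <= U)%VS -> invariant rho U' ->
        U' = 0%VS \/ U' = U].

Definition isotypic_of (G : Type) (Rr V : vectType C) (rhoR : G -> 'End(Rr))
    (rhoV : G -> 'End(V)) :=
  forall U : {vspace V}, irreducible_sub rhoV U ->
    exists f : 'Hom(Rr, V),
      [/\ lker f = 0%VS, limg f = U & forall g, (f \o rhoR g = rhoV g \o f)%VF].

Definition dual (V : vectType C) := 'Hom(V, C^o).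
Definition dact (G : Type) (inv : G -> G) (V : vectType C) (rho : G -> 'End(V))
    (g : G) (f : dual V) : dual V := (f \o rho (inv g))%VF.

Definition actW (G : Type) (inv : G -> G) (V : vectType C) (rho : G -> 'End(V))
    (g : G) (w : V * dual V) : V * dual V := (rho g w.1, dact inv rho g w.2).

Definition Cdual (V : vectType C) (ip : V -> V -> C) (v : V) : dual V :=
  linfun (fun w : V => (ip v w : C^o)).
Definition Cinv (V : vectType C) (ip : V -> V -> C) (f : dual V) : V :=
  epsilon (inhabits 0) (fun v => Cdual ip v = f).
Definition CW (V : vectType C) (ip : V -> V -> C) (w : V * dual V) : V * dual V :=
  (Cinv ip w.2, Cdual ip w.1).

Definition ipdual (V : vectType C) (ip : V -> V -> C) (f f' : dual V) : C :=
  ip (Cinv ip f') (Cinv ip f).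
Definition ipW (V : vectType C) (ip : V -> V -> C) (x y : V * dual V) : C :=
  ip x.1 y.1 + ipdual ip x.2 y.2.

Definition antiunitary (V : vectType C) (ip : V -> V -> C)
    (T : V * dual V -> V * dual V) :=
  [/\ antilinear T, bijective T &
      forall x y, ipW ip (T x) (T y) = (ipW ip x y)^*].

Definition mixing (V : vectType C) (T : V * dual V -> V * dual V) :=
  (forall v, (T (v, 0)).1 = 0) /\ (forall f, (T (0, f)).2 = 0).
Definition nonmixing (V : vectType C) (T : V * dual V -> V * dual V) :=
  (forall v, (T (v, 0)).2 = 0) /\ (forall f, (T (0, f)).1 = 0).

(** H = Hom_G(R, V) and its dual counterpart Hom_G(dual R, dual V) *)
Definition Hom_G (G : Type) (Rr V : vectType C) (rhoR : G -> 'End(Rr))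
    (rhoV : G -> 'End(V)) (h : 'Hom(Rr, V)) :=
  forall g r, h (rhoR g r) = rhoV g (h r).
Definition Hom_G_dual (G : Type) (inv : G -> G) (Rr V : vectType C)
    (rhoR : G -> 'End(Rr)) (rhoV : G -> 'End(V)) (h : 'Hom(dual Rr, dual V)) :=
  forall g t, h (dact inv rhoR g t) = dact inv rhoV g (h t).

End Defs.

From HB Require Import structures.
From mathcomp Require Import all_boot all_order all_algebra.
From mathcomp Require Import all_classical all_reals all_analysis.
From mathcomp Require Import complex.
From Stdlib Require Import ClassicalEpsilon.

Set Implicit Arguments. Unset Strict Implicit. Unset Printing Implicit Defensive.
Import Order.TTheory GRing.Theory Num.Theory.
Import numFieldNormedType.Exports.
Local Open Scope ring_scope.

(* Each of the four blocks of T, say t, restricted along h in H gives an antilinear map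
   r |-> t (h r) out of R (or R^* ) intertwining the action with its a-twist.  If one of
   them is nonzero, composing with C on the appropriate side yields a nonzero linear map
   into V intertwining an irreducible representation (R, or R^*, which is irreducible
   because C is an antilinear G-isomorphism R -> R^* ) with the a-twist of V.  Its image is
   irreducible, hence isomorphic to R, and this produces an antilinear bijection B onto R
   or R^* intertwining the action with its a-twist.  Then A h := t \o h \o B^-1 is linear,
   as a composite of two antilinear maps, G-equivariant, and antilinear in h, and
   t (h r) = A h (B r).  If all these maps vanish, A = B = 0 works.  Being mixing or
   nonmixing says which two blocks of T vanish. *)

Definition twisted_equivariant (G U W : Type) (a : G -> G)
    (tau : G -> U -> U) (sigma : G -> W -> W) (f : U -> W) :=
  forall g x, f (tau g x) = sigma (a g) (f x).

Section Proposition3p5.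
Variable K : realType.
Local Notation C := K[i].

Definition irreducible_action (G : Type) (U : vectType C) (tau : G -> U -> U) :=
  forall U' : {vspace U}, (forall g u, u \in U' -> tau g u \in U') ->
    U' = 0%VS \/ U' = fullv.

Lemma linfunE_linear (U W : vectType C) (f : U -> W) :
  (forall c x y, f (c *: x + y) = c *: f x + f y) -> forall x, linfun f x = f x.
Proof.
move=> f_lin; pose F : {linear U -> W} := HB.pack f (GRing.isLinear.Build _ _ _ _ f f_lin).
exact: (lfunE F).
Qed.

Lemma dim_dual (V : vectType C) : \dim {: dual V} = \dim {: V}.
Proof. by rewrite !dimvf /dual /= /dim /= muln1. Qed.

Section Maps.
Variables (U W : vectType C) (f : U -> W).
Hypothesis f_anti : antilinear f.

Lemma antilinear0 : f 0 = 0.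
Proof.
have := @f_anti 1 0 0 I I; rewrite scale1r addr0 rmorph1 scale1r => f00.
by apply: (addrI (f 0)); rewrite addr0 -f00.
Qed.

Lemma antilinearD x y : f (x + y) = f x + f y.
Proof. by rewrite -[x]scale1r f_anti // rmorph1 !scale1r. Qed.

Lemma antilinearZ c x : f (c *: x) = c^* *: f x.
Proof. by rewrite -[c *: x]addr0 f_anti // antilinear0 addr0. Qed.

Lemma antilinear_sum n (c : 'I_n -> C) (x : 'I_n -> U) :
  f (\sum_i c i *: x i) = \sum_i (c i)^* *: f (x i).
Proof.
elim/big_rec2: _ => [|i y1 y2 _ <-]; first exact: antilinear0.
by rewrite antilinearD antilinearZ.
Qed.

Lemma antilinear_inv (g : W -> U) : cancel f g -> cancel g f -> antilinear g.
Proof.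
by move=> fK gK c x y _ _; apply: (can_inj fK); rewrite f_anti // !gK conjCK.
Qed.

Lemma antilinear_lfun (X : vectType C) (L : 'Hom(X, U)) : antilinear (f \o L).
Proof. by move=> c x y _ _; rewrite /= linearP f_anti. Qed.

Lemma lfun_antilinear (X : vectType C) (L : 'Hom(W, X)) : antilinear (L \o f).
Proof. by move=> c x y _ _; rewrite /= f_anti // linearP. Qed.

Lemma antilinear_surj : injective f -> (\dim {:W} <= \dim {:U})%N ->
  forall w, exists u, f u = w.
Proof.
move=> f_inj dimWU w.
pose X := vbasis {:U}; pose Y := map_tuple f X.
have fY (k : 'I_(\dim {:U}) -> C) : f (\sum_i (k i)^* *: X`_i) = \sum_i k i *: Y`_i.
  by rewrite antilinear_sum; apply: eq_bigr => i _; rewrite conjCK (nth_map 0) ?size_tuple.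
have freeY : free Y.
  move/freeP: (basis_free (vbasisP {:U})) => freeX; apply/freeP => k Yk0 i.
  have /freeX/(_ i)/eqP : \sum_i (k i)^* *: X`_i = 0.
    by apply: f_inj; rewrite fY Yk0 antilinear0.
  by rewrite conjC_eq0 => /eqP.
have spanY : (<<Y>> = fullv)%VS.
  by apply/eqP; rewrite eqEdim subvf (eqP freeY) size_tuple.
have /coord_span -> : w \in <<Y>>%VS by rewrite spanY memvf.
by exists (\sum_i (coord Y i w)^* *: X`_i); rewrite fY.
Qed.

Lemma antilinear_spanP (X : {vspace U}) w :
  reflect (exists2 x, x \in X & w = f x) (w \in <<map_tuple f (vbasis X)>>%VS).
Proof.
have fX (i : 'I_(\dim X)) : f (vbasis X)`_i = (map_tuple f (vbasis X))`_i.
  by rewrite (nth_map 0) // size_tuple.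
apply: (iffP idP) => [/coord_span ->|[x Xx ->]].
  exists (\sum_i (coord (map_tuple f (vbasis X)) i w)^* *: (vbasis X)`_i).
    by apply: rpred_sum => i _; rewrite rpredZ // vbasis_mem // mem_nth ?size_tuple.
  by rewrite antilinear_sum; apply: eq_bigr => j _; rewrite conjCK fX.
rewrite (coord_vbasis Xx) antilinear_sum; apply: rpred_sum => i _.
by rewrite rpredZ // fX memv_span // mem_nth // size_tuple.
Qed.

Lemma irreducible_action_antilinear (G : Type) (tau : G -> U -> U) (sigma : G -> W -> W) :
  injective f -> (forall g u, f (tau g u) = sigma g (f u)) ->
  irreducible_action sigma -> irreducible_action tau.
Proof.
move=> f_inj f_eq irr_sigma U' U'_inv.
have [g w /antilinear_spanP [u U'u ->]|X0|X1] :=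
  irr_sigma <<map_tuple f (vbasis U')>>%VS.
- by rewrite -f_eq; apply/antilinear_spanP; exists (tau g u) => //; apply: U'_inv.
- left; apply/eqP; rewrite -subv0; apply/subvP => u U'u.
  have : f u \in <<map_tuple f (vbasis U')>>%VS by apply/antilinear_spanP; exists u.
  by rewrite X0 !memv0 => /eqP fu0; apply/eqP/f_inj; rewrite fu0 antilinear0.
- right; apply/eqP; rewrite eqEsubv subvf /=; apply/subvP => u _.
  have : f u \in <<map_tuple f (vbasis U')>>%VS by rewrite X1 memvf.
  by case/antilinear_spanP => x U'x /f_inj ->.
Qed.

End Maps.

Lemma antilinear_comp_linear (U1 U2 U3 : vectType C) (f : U2 -> U3) (h : U1 -> U2) :
  antilinear f -> antilinear h ->
  forall c x y, f (h (c *: x + y)) = c *: f (h x) + f (h y).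
Proof. by move=> f_anti h_anti c x y; rewrite h_anti // f_anti // conjCK. Qed.

Section InnerProduct.
Variables (V : vectType C) (ip : V -> V -> C).
Hypothesis ip_inner : is_inner_product ip.

Lemma CdualE v w : Cdual ip v w = ip v w.
Proof.
by rewrite linfunE_linear // => c x y; case: ip_inner => ipD _ _; rewrite ipD.
Qed.

Lemma Cdual_antilinear : antilinear (Cdual ip).
Proof.
case: ip_inner => ipD ipC _ c v w _ _; apply/lfunP => x.
by rewrite add_lfunE scale_lfunE !CdualE ipC ipD rmorphD rmorphM /= -!ipC.
Qed.

Lemma Cdual_inj : injective (Cdual ip).
Proof.
move=> v w vw; have Cdual0 : Cdual ip (v - w) = 0.
  rewrite -scaleN1r (antilinearD Cdual_antilinear) (antilinearZ Cdual_antilinear).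
  by rewrite vw rmorphN1 scaleN1r subrr.
apply/eqP; rewrite -subr_eq0; apply/negPn/negP => nz.
by case: ip_inner => _ _ /(_ _ nz); rewrite -CdualE Cdual0 zero_lfunE ltxx.
Qed.

Lemma CinvK : cancel (Cinv ip) (Cdual ip).
Proof.
move=> f; apply: (epsilon_spec (inhabits 0) (fun v => Cdual ip v = f)).
by apply: (antilinear_surj Cdual_antilinear Cdual_inj); rewrite dim_dual.
Qed.

Lemma CdualK : cancel (Cdual ip) (Cinv ip).
Proof. by move=> v; apply: Cdual_inj; rewrite CinvK. Qed.

Lemma Cinv_antilinear : antilinear (Cinv ip).
Proof. exact: (antilinear_inv Cdual_antilinear CdualK CinvK). Qed.

Lemma Cdual_bij : bijective (Cdual ip).
Proof. exact: Bijective CdualK CinvK. Qed.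

Lemma Cinv_inj : injective (Cinv ip).
Proof. exact: can_inj CinvK. Qed.

Variables (G : topologicalType) (mul : G -> G -> G) (inv : G -> G) (e : G).
Hypothesis group : [/\ associative mul, left_id e mul & left_inverse e inv mul].
Variable rho : G -> 'End(V).
Hypothesis rho_unitary : unitary_rep mul e ip rho.

Lemma rho_invK g : cancel (rho (inv g)) (rho g).
Proof.
have mulgV : mul g (inv g) = e.
  case: group => mulA mul1g mulVg.
  by rewrite -[mul g _]mul1g -{1}(mulVg (inv g)) -mulA (mulA (inv g)) mulVg mul1g.
case: rho_unitary => rho1 rhoM _ _ w.
by rewrite -comp_lfunE -rhoM mulgV rho1 id_lfunE.
Qed.

Lemma Cdual_equivariant g v : Cdual ip (rho g v) = dact inv rho g (Cdual ip v).
Proof.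
apply/lfunP => w; rewrite /dact comp_lfunE !CdualE.
by case: rho_unitary => _ _ rho_ip _; rewrite -{1}(rho_invK g w) rho_ip.
Qed.

Lemma Cinv_equivariant g f : Cinv ip (dact inv rho g f) = rho g (Cinv ip f).
Proof. by apply: Cdual_inj; rewrite CinvK Cdual_equivariant CinvK. Qed.

End InnerProduct.

Lemma irreducible_action_fullv (G : Type) (V : vectType C) (rho : G -> 'End(V)) :
  irreducible_sub rho fullv -> irreducible_action (fun g => rho g).
Proof.
case=> _ _ rho_irr U' U'_inv; apply: rho_irr; first exact: subvf.
by move=> g; apply/subvP => _ /memv_imgP [u U'u ->]; apply: U'_inv.
Qed.

Lemma dact0 (G : Type) (inv : G -> G) (V : vectType C) (rho : G -> 'End(V)) g :
  dact inv rho g 0 = 0.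
Proof. by apply/lfunP => x; rewrite /dact comp_lfunE !zero_lfunE. Qed.

Lemma antilinear_fst (U W1 W2 : vectType C) (f : U -> W1 * W2) :
  antilinear f -> antilinear (fun x => (f x).1).
Proof. by move=> f_anti c x y _ _; rewrite f_anti. Qed.

Lemma antilinear_snd (U W1 W2 : vectType C) (f : U -> W1 * W2) :
  antilinear f -> antilinear (fun x => (f x).2).
Proof. by move=> f_anti c x y _ _; rewrite f_anti. Qed.

Section Factorization.
Variables (G : Type) (a : G -> G).
Hypothesis a_surj : forall g, exists g', a g' = g.
Variables (Rs X Y Z : vectType C).
Variables (tau : G -> Rs -> Rs) (rhoX : G -> X -> X).
Variables (zeta : G -> Z -> Z) (sigma : G -> Y -> Y).
Hypothesis sigma0 : forall g, sigma g 0 = 0.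
Variable t : X -> Y.
Hypotheses (t_anti : antilinear t) (t_tw : twisted_equivariant a rhoX sigma t).
Hypothesis anti_iso_of_nonzero : forall s : Rs -> Y,
  antilinear s -> twisted_equivariant a tau sigma s -> (exists r, s r != 0) ->
  exists B : Rs -> Z, [/\ antilinear B, bijective B & twisted_equivariant a tau zeta B].

Lemma antilinear_factorization :
  exists (A : 'Hom(Rs, X) -> 'Hom(Z, Y)) (B : Rs -> Z),
  (antilinear_between (fun h : 'Hom(Rs, X) => forall g r, h (tau g r) = rhoX g (h r))
     (fun A : 'Hom(Z, Y) => forall g z, A (zeta g z) = sigma g (A z)) A /\ antilinear B) /\
  forall (h : 'Hom(Rs, X)) r, (forall g r, h (tau g r) = rhoX g (h r)) -> t (h r) = A h (B r).
Proof.
pose P (h : 'Hom(Rs, X)) := forall g r, h (tau g r) = rhoX g (h r).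
have [[h [r [Ph tr_nz]]]|t0] := pselect (exists h r, P h /\ t (h r) != 0); last first.
  exists (fun _ => 0), (fun _ => 0); split.
    split; [split=> [c h1 h2 _ _|h1 _ g z] | move=> c x y _ _].
    - by rewrite scaler0 addr0.
    - by rewrite !zero_lfunE sigma0.
    - by rewrite scaler0 addr0.
  move=> h r Ph; rewrite zero_lfunE; apply/eqP/negPn/negP => tr_nz.
  by apply: t0; exists h, r.
have [B [B_anti [Binv BK BinvK] B_tw]] := anti_iso_of_nonzero (s := t \o h)
  (antilinear_lfun t_anti h) (fun g x => etrans (congr1 t (Ph g x)) (t_tw g _))
  (ex_intro _ r tr_nz).
pose A (h : 'Hom(Rs, X)) := linfun (t \o h \o Binv).
have AE h' z : A h' z = t (h' (Binv z)).
  rewrite linfunE_linear // => c x y /=.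
  exact: (antilinear_comp_linear (antilinear_lfun t_anti h') (antilinear_inv B_anti BK BinvK)).
exists A, B; split; last by move=> h' r' _; rewrite AE BK.
split=> //; split=> [c h1 h2 _ _|h1 Ph1 g z].
  by apply/lfunP => z; rewrite add_lfunE scale_lfunE !AE add_lfunE scale_lfunE t_anti.
have [g' <-] := a_surj g.
by rewrite -[z]BinvK -B_tw !AE !BK Ph1 t_tw.
Qed.

End Factorization.

Section Isotypic.
Variables (G : Type) (a : G -> G).
Hypothesis a_surj : forall g, exists g', a g' = g.
Variables (Rr V : vectType C) (rhoR : G -> 'End(Rr)) (rhoV : G -> 'End(V)).
Hypothesis V_isotypic : isotypic_of rhoR rhoV.

Section TwistedHom.
Variables (U : vectType C) (tau : G -> U -> U) (k : 'Hom(U, V)).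
Hypotheses (tau_irr : irreducible_action tau)
  (k_tw : twisted_equivariant a tau (fun g => rhoV g) k) (k_nz : exists u, k u != 0).

Lemma twisted_hom_lker0 : lker k == 0%VS.
Proof.
have [u0 ku0] := k_nz; have [g u|->//|kerT] := @tau_irr (lker k).
  by rewrite !memv_ker k_tw => /eqP->; rewrite linear0.
by move: ku0; rewrite -memv_ker kerT memvf.
Qed.

Lemma twisted_hom_limg_irreducible : irreducible_sub rhoV (limg k).
Proof.
split.
- have [u0 ku0] := k_nz; apply: contraNneq ku0 => img0.
  by rewrite -memv0 -img0 memv_img ?memvf.
- move=> g; apply/subvP => _ /memv_imgP [_ /memv_imgP [u _ ->] ->].
  by have [g' <-] := a_surj g; rewrite -k_tw memv_img ?memvf.
move=> U' U'k U'_inv.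
have [g u|pre0|preT] := @tau_irr (k @^-1: U')%VS.
- rewrite -!memv_preim k_tw => U'ku.
  exact: (subvP (U'_inv (a g))) _ (memv_img _ U'ku).
- left; apply/eqP; rewrite -subv0; apply/subvP => _ /[dup] /(subvP U'k) /memv_imgP [u _ ->].
  by rewrite [k u \in U']memv_preim pre0 !memv0 => /eqP->; rewrite linear0.
- right; apply/eqP; rewrite eqEsubv U'k; apply/subvP => _ /memv_imgP [u _ ->].
  by rewrite memv_preim preT memvf.
Qed.

Lemma isotypic_twisted_iso :
  exists M : 'Hom(U, Rr), bijective M /\ twisted_equivariant a tau (fun g => rhoR g) M.
Proof.
have [f [/eqP f_inj imf f_tw]] := V_isotypic twisted_hom_limg_irreducible.
have fK : {in limg k, cancel f^-1%VF f} by rewrite -imf; apply: limg_lfunVK.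
have kK : {in limg f, cancel k^-1%VF k} by rewrite imf; apply: limg_lfunVK.
have f_img r : f r \in limg f by rewrite memv_img ?memvf.
have k_img u : k u \in limg k by rewrite memv_img ?memvf.
have f_eq g r : rhoV g (f r) = f (rhoR g r) by rewrite -!comp_lfunE f_tw.
exists (f^-1 \o k)%VF; split=> [|g u].
  exists (k^-1 \o f)%VF => [u|r]; rewrite !comp_lfunE.
    by rewrite fK // (lker0_lfunK twisted_hom_lker0).
  by rewrite kK // (lker0_lfunK f_inj).
by rewrite !comp_lfunE k_tw -{1}[k u]fK // f_eq (lker0_lfunK f_inj).
Qed.

End TwistedHom.

Lemma twisted_anti_iso_rep (U U' : vectType C) (tau : G -> U -> U)
    (tau' : G -> U' -> U') (d : U -> U') (s : U -> V) :
  irreducible_action tau' -> antilinear d -> bijective d ->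
  (forall g u, d (tau g u) = tau' g (d u)) ->
  antilinear s -> twisted_equivariant a tau (fun g => rhoV g) s -> (exists u, s u != 0) ->
  exists B : U -> Rr,
    [/\ antilinear B, bijective B & twisted_equivariant a tau (fun g => rhoR g) B].
Proof.
move=> tau'_irr d_anti [c dK cK] d_eq s_anti s_tw [u su_nz].
have c_eq g x : c (tau' g x) = tau g (c x) by apply: (can_inj dK); rewrite cK d_eq cK.
pose k := linfun (s \o c).
have kE x : k x = s (c x).
  rewrite linfunE_linear // => z x' y /=.
  exact: (antilinear_comp_linear s_anti (antilinear_inv d_anti dK cK)).
have k_tw : twisted_equivariant a tau' (fun g => rhoV g) k.
  by move=> g x; rewrite !kE c_eq s_tw.
have k_nz : exists x, k x != 0 by exists (d u); rewrite kE dK.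
have [M [M_bij M_tw]] := isotypic_twisted_iso tau'_irr k_tw k_nz.
exists (M \o d); split.
- exact: (lfun_antilinear d_anti M).
- exact: bij_comp M_bij (Bijective dK cK).
- by move=> g x /=; rewrite d_eq M_tw.
Qed.

End Isotypic.

Section AntiunitarySymmetry.
Variables (G : topologicalType) (mul : G -> G -> G) (inv : G -> G) (e : G).
Hypothesis group : [/\ associative mul, left_id e mul & left_inverse e inv mul].
Variable a : G -> G.
Hypothesis a_surj : forall g, exists g', a g' = g.
Variables (Rr : vectType C) (ipR : Rr -> Rr -> C) (rhoR : G -> 'End(Rr)).
Hypotheses (ipR_inner : is_inner_product ipR) (rhoR_unitary : unitary_rep mul e ipR rhoR).
Hypothesis R_irr : irreducible_action (fun g => rhoR g).
Variables (V : vectType C) (ipV : V -> V -> C) (rhoV : G -> 'End(V)).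
Hypotheses (ipV_inner : is_inner_product ipV) (rhoV_unitary : unitary_rep mul e ipV rhoV).
Hypothesis V_isotypic : isotypic_of rhoR rhoV.

Lemma irreducible_action_dual : irreducible_action (dact inv rhoR).
Proof.
exact: (irreducible_action_antilinear (Cinv_antilinear ipR_inner) (Cinv_inj ipR_inner)
  (Cinv_equivariant ipR_inner group rhoR_unitary) R_irr).
Qed.

Lemma twisted_anti_iso_dual (U : vectType C) (tau : G -> U -> U) (s : U -> dual V) :
  irreducible_action tau -> antilinear s ->
  twisted_equivariant a tau (dact inv rhoV) s -> (exists u, s u != 0) ->
  exists B : U -> dual Rr,
    [/\ antilinear B, bijective B & twisted_equivariant a tau (dact inv rhoR) B].
Proof.
move=> tau_irr s_anti s_tw [u su_nz].
pose k := linfun (Cinv ipV \o s).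
have kE x : k x = Cinv ipV (s x).
  rewrite linfunE_linear // => c x' y /=.
  exact: (antilinear_comp_linear (Cinv_antilinear ipV_inner) s_anti).
have k_tw : twisted_equivariant a tau (fun g => rhoV g) k.
  by move=> g x; rewrite !kE s_tw (Cinv_equivariant ipV_inner group rhoV_unitary).
have k_nz : exists x, k x != 0.
  exists u; rewrite kE; apply: contraNneq su_nz => /(congr1 (Cdual ipV)).
  by rewrite CinvK // (antilinear0 (Cdual_antilinear ipV_inner)) => ->.
have [M [M_bij M_tw]] := isotypic_twisted_iso a_surj V_isotypic tau_irr k_tw k_nz.
exists (Cdual ipR \o M); split.
- exact: (antilinear_lfun (Cdual_antilinear ipR_inner) M).
- exact: bij_comp (Cdual_bij ipR_inner) M_bij.
- by move=> g x /=; rewrite M_tw (Cdual_equivariant ipR_inner group rhoR_unitary).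
Qed.

Variable T : V * dual V -> V * dual V.
Hypotheses (T_anti : antilinear T)
  (T_tw : twisted_equivariant a (actW inv rhoV) (actW inv rhoV) T).

Lemma T_inl_antilinear : antilinear (fun v : V => T (v, 0)).
Proof.
move=> c v w _ _; rewrite -T_anti //; congr T.
by congr (_, _); rewrite /= scaler0 addr0.
Qed.

Lemma T_inr_antilinear : antilinear (fun f : dual V => T (0, f)).
Proof.
move=> c f f' _ _; rewrite -T_anti //; congr T.
by congr (_, _); rewrite /= scaler0 addr0.
Qed.

Lemma T_inl_twisted : twisted_equivariant a (fun g => rhoV g) (actW inv rhoV) (fun v => T (v, 0)).
Proof. by move=> g v; rewrite -T_tw /actW /= dact0. Qed.

Lemma T_inr_twisted : twisted_equivariant a (dact inv rhoV) (actW inv rhoV) (fun f => T (0, f)).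
Proof. by move=> g f; rewrite -T_tw /actW /= linear0. Qed.

Lemma block_factor_V_V :
  exists (A : 'Hom(Rr, V) -> 'Hom(Rr, V)) (B : Rr -> Rr),
    (antilinear_between (Hom_G rhoR rhoV) (Hom_G rhoR rhoV) A /\ antilinear B) /\
    forall h r, Hom_G rhoR rhoV h -> (T (h r, 0)).1 = A h (B r).
Proof.
apply: (antilinear_factorization (tau := fun g => rhoR g) (rhoX := fun g => rhoV g)
  (zeta := fun g => rhoR g) (sigma := fun g => rhoV g) a_surj (fun g => linear0 (rhoV g))
  (antilinear_fst T_inl_antilinear)).
  by move=> g v; rewrite /= T_inl_twisted.
move=> s; apply: (twisted_anti_iso_rep a_surj V_isotypic irreducible_action_dual
  (Cdual_antilinear ipR_inner) (Cdual_bij ipR_inner)).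
exact: (Cdual_equivariant ipR_inner group rhoR_unitary).
Qed.

Lemma block_factor_V_dual :
  exists (A : 'Hom(Rr, V) -> 'Hom(dual Rr, dual V)) (B : Rr -> dual Rr),
    (antilinear_between (Hom_G rhoR rhoV) (Hom_G_dual inv rhoR rhoV) A /\ antilinear B) /\
    forall h r, Hom_G rhoR rhoV h -> (T (h r, 0)).2 = A h (B r).
Proof.
apply: (antilinear_factorization (tau := fun g => rhoR g) (rhoX := fun g => rhoV g)
  (zeta := dact inv rhoR) (sigma := dact inv rhoV) a_surj (dact0 inv rhoV)
  (antilinear_snd T_inl_antilinear)).
  by move=> g v; rewrite /= T_inl_twisted.
by move=> s; apply: twisted_anti_iso_dual R_irr.
Qed.

Lemma block_factor_dual_V :
  exists (A : 'Hom(dual Rr, dual V) -> 'Hom(Rr, V)) (B : dual Rr -> Rr),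
    (antilinear_between (Hom_G_dual inv rhoR rhoV) (Hom_G rhoR rhoV) A /\ antilinear B) /\
    forall f t, Hom_G_dual inv rhoR rhoV f -> (T (0, f t)).1 = A f (B t).
Proof.
apply: (antilinear_factorization (tau := dact inv rhoR) (rhoX := dact inv rhoV)
  (zeta := fun g => rhoR g) (sigma := fun g => rhoV g) a_surj (fun g => linear0 (rhoV g))
  (antilinear_fst T_inr_antilinear)).
  by move=> g f; rewrite /= T_inr_twisted.
move=> s; apply: (twisted_anti_iso_rep a_surj V_isotypic R_irr
  (Cinv_antilinear ipR_inner) (Bijective (CinvK ipR_inner) (CdualK ipR_inner))).
exact: (Cinv_equivariant ipR_inner group rhoR_unitary).
Qed.

Lemma block_factor_dual_dual :
  exists (A : 'Hom(dual Rr, dual V) -> 'Hom(dual Rr, dual V)) (B : dual Rr -> dual Rr),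
    (antilinear_between (Hom_G_dual inv rhoR rhoV) (Hom_G_dual inv rhoR rhoV) A /\
     antilinear B) /\
    forall f t, Hom_G_dual inv rhoR rhoV f -> (T (0, f t)).2 = A f (B t).
Proof.
apply: (antilinear_factorization (tau := dact inv rhoR) (rhoX := dact inv rhoV)
  (zeta := dact inv rhoR) (sigma := dact inv rhoV) a_surj (dact0 inv rhoV)
  (antilinear_snd T_inr_antilinear)).
  by move=> g f; rewrite /= T_inr_twisted.
by move=> s; apply: twisted_anti_iso_dual irreducible_action_dual.
Qed.

Lemma mixing_factorization : mixing T ->
  exists (A1 : 'Hom(Rr, V) -> 'Hom(dual Rr, dual V)) (B1 : Rr -> dual Rr)
         (A2 : 'Hom(dual Rr, dual V) -> 'Hom(Rr, V)) (B2 : dual Rr -> Rr),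
    [/\ antilinear_between (Hom_G rhoR rhoV) (Hom_G_dual inv rhoR rhoV) A1,
        antilinear B1,
        antilinear_between (Hom_G_dual inv rhoR rhoV) (Hom_G rhoR rhoV) A2
      & antilinear B2] /\
    (forall h r, Hom_G rhoR rhoV h -> T (h r, 0) = (0, A1 h (B1 r))) /\
    (forall f t, Hom_G_dual inv rhoR rhoV f -> T (0, f t) = (A2 f (B2 t), 0)).
Proof.
case=> T_inl1 T_inr2.
have [A1 [B1 [[A1_anti B1_anti] T_inl2]]] := block_factor_V_dual.
have [A2 [B2 [[A2_anti B2_anti] T_inr1]]] := block_factor_dual_V.
exists A1, B1, A2, B2; split=> //; split=> [h r hG|f t fG].
  by rewrite -T_inl2 //; case: (T _) (T_inl1 (h r)) => x y /= ->.
by rewrite -T_inr1 //; case: (T _) (T_inr2 (f t)) => x y /= ->.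
Qed.

Lemma nonmixing_factorization : nonmixing T ->
  exists (A1 : 'Hom(Rr, V) -> 'Hom(Rr, V)) (B1 : Rr -> Rr)
         (A2 : 'Hom(dual Rr, dual V) -> 'Hom(dual Rr, dual V)) (B2 : dual Rr -> dual Rr),
    [/\ antilinear_between (Hom_G rhoR rhoV) (Hom_G rhoR rhoV) A1,
        antilinear B1,
        antilinear_between (Hom_G_dual inv rhoR rhoV) (Hom_G_dual inv rhoR rhoV) A2
      & antilinear B2] /\
    (forall h r, Hom_G rhoR rhoV h -> T (h r, 0) = (A1 h (B1 r), 0)) /\
    (forall f t, Hom_G_dual inv rhoR rhoV f -> T (0, f t) = (0, A2 f (B2 t))).
Proof.
case=> T_inl2 T_inr1.
have [A1 [B1 [[A1_anti B1_anti] T_inl1]]] := block_factor_V_V.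
have [A2 [B2 [[A2_anti B2_anti] T_inr2]]] := block_factor_dual_dual.
exists A1, B1, A2, B2; split=> //; split=> [h r hG|f t fG].
  by rewrite -T_inl1 //; case: (T _) (T_inl2 (h r)) => x y /= ->.
by rewrite -T_inr2 //; case: (T _) (T_inr1 (f t)) => x y /= ->.
Qed.

End AntiunitarySymmetry.
End Proposition3p5.

Theorem proposition3p5
  (K : realType) (G : topologicalType) (mul : G -> G -> G) (inv : G -> G) (e : G)
  (HG : compact_group mul inv e)
  (Rr : vectType K[i]) (ipR : Rr -> Rr -> K[i]) (HipR : is_inner_product ipR)
  (rhoR : G -> 'End(Rr)) (HrhoR : unitary_rep mul e ipR rhoR)
  (Hirr : irreducible_sub rhoR fullv)
  (V : vectType K[i]) (ipV : V -> V -> K[i]) (HipV : is_inner_product ipV)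
  (rhoV : G -> 'End(V)) (HrhoV : unitary_rep mul e ipV rhoV)
  (Hiso : isotypic_of rhoR rhoV)
  (T : V * dual V -> V * dual V) (HT : antiunitary ipV T)
  (HTC : forall w, T (CW ipV w) = CW ipV (T w))
  (a : G -> G) (Ha : group_automorphism mul a)
  (HTa : forall g w, T (actW inv rhoV g w) = actW inv rhoV (a g) (T w))
  (Hcase : mixing T \/ nonmixing T) :
  (mixing T ->
   exists (A1 : 'Hom(Rr, V) -> 'Hom(dual Rr, dual V)) (B1 : Rr -> dual Rr)
          (A2 : 'Hom(dual Rr, dual V) -> 'Hom(Rr, V)) (B2 : dual Rr -> Rr),
     [/\ antilinear_between (Hom_G rhoR rhoV) (Hom_G_dual inv rhoR rhoV) A1,
         antilinear B1,
         antilinear_between (Hom_G_dual inv rhoR rhoV) (Hom_G rhoR rhoV) A2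
       & antilinear B2] /\
     (forall h r, Hom_G rhoR rhoV h -> T (h r, 0) = (0, A1 h (B1 r))) /\
     (forall f t, Hom_G_dual inv rhoR rhoV f -> T (0, f t) = (A2 f (B2 t), 0)))
  /\
  (nonmixing T ->
   exists (A1 : 'Hom(Rr, V) -> 'Hom(Rr, V)) (B1 : Rr -> Rr)
          (A2 : 'Hom(dual Rr, dual V) -> 'Hom(dual Rr, dual V)) (B2 : dual Rr -> dual Rr),
     [/\ antilinear_between (Hom_G rhoR rhoV) (Hom_G rhoR rhoV) A1,
         antilinear B1,
         antilinear_between (Hom_G_dual inv rhoR rhoV) (Hom_G_dual inv rhoR rhoV) A2
       & antilinear B2] /\
     (forall h r, Hom_G rhoR rhoV h -> T (h r, 0) = (A1 h (B1 r), 0)) /\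
     (forall f t, Hom_G_dual inv rhoR rhoV f -> T (0, f t) = (0, A2 f (B2 t)))).
Proof.
case: HG => group _; case: Ha => -[ainv _ aK] _; case: HT => T_anti _ _.
have a_surj g : exists g', a g' = g by exists (ainv g).
have R_irr := irreducible_action_fullv Hirr.
split.
  exact: (mixing_factorization group a_surj HipR HrhoR R_irr HipV HrhoV Hiso T_anti HTa).
exact: (nonmixing_factorization group a_surj HipR HrhoR R_irr HipV HrhoV Hiso T_anti HTa).
Qed.
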